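(* Let $G$ be a graph with $L(G)=2l(G)$. Let $F_L, F_l$ be maximum matchings of $G$ with $\nu(G\setminus F_L)=L(G)$ and $\nu(G\setminus F_l)=l(G)$, and let $H_L$ be any maximum matching of $G\setminus F_L$. Then: (c1) $F_l\setminus F_L\subseteq H_L$; (c2) $H_L\setminus F_l$ is a maximum matching of $G\setminus F_l$; (c3) $F_L\setminus F_l$ is a maximum matching of $G\setminus F_l$.
   Context: Graphs are finite, undirected, without loops or multiple edges. $\nu(G)$ denotes the maximum size of a matching of $G$; a matching is maximum if it has $\nu(G)$ edges. For $F\subseteq E(G)$, $G\setminus F$ is the graph with vertex set $V(G)$ and edge set $E(G)\setminus F$. Define $L(G)=\max\{\nu(G\setminus F): F \text{ a maximum matching of } G\}$ and $l(G)=\min\{\nu(G\setminus F): F \text{ a maximum matching of } G\}$. *)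

(* A finite simple graph on vertex type T is represented by
   its edge set E : {set {set T}}, every edge being a 2-element vertex set. *)
From mathcomp Require Import all_boot.
Set Implicit Arguments. Unset Strict Implicit. Unset Printing Implicit Defensive.

Section Matchings.
Variable T : finType.

Definition simple_graph (E : {set {set T}}) : bool :=
  [forall x in E, #|x| == 2].

Definition matching (E M : {set {set T}}) : bool :=
  (M \subset E) &&
  [forall e1 in M, forall e2 in M, (e1 != e2) ==> [disjoint e1 & e2]].

Definition nu (E : {set {set T}}) : nat :=
  \max_(M in powerset E | matching E M) #|M|.

Definition max_matching (E M : {set {set T}}) : bool :=
  matching E M && (#|M| == nu E).

Definition Lg (E : {set {set T}}) : nat :=
  \max_(F in powerset E | max_matching E F) nu (E :\: F).

(* l(G) = min { nu(G \ F) : F maximum matching of G }; the neutral element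
   #|E| is an upper bound of every nu (E :\: F), and a maximum matching
   always exists (e.g. set0 is a matching), so this is the true minimum. *)
Definition lg (E : {set {set T}}) : nat :=
  \big[minn/#|E|]_(F in powerset E | max_matching E F) nu (E :\: F).

End Matchings.

From mathcomp Require Import all_boot.
From mathcomp Require Import zify.
Set Implicit Arguments. Unset Strict Implicit. Unset Printing Implicit Defensive.

(* Put l = l(G), so L(G) = 2l, and let k = |Fl \ FL|.  Since FL
   and Fl are both maximum matchings, |FL \ Fl| = k as well.  The matching HL
   of G \ FL splits as (HL ∩ Fl) ∪ (HL \ Fl), where
   - HL ∩ Fl avoids FL, hence lies in Fl \ FL and has at most k edges;
   - HL \ Fl is a matching of G \ Fl, hence has at most l edges;
   and FL \ Fl is a matching of G \ Fl, so k <= l.  Therefore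
   2l = |HL| <= k + l <= 2l, which forces |HL \ Fl| = l, |FL \ Fl| = k = l
   (claims c2 and c3) and |HL ∩ Fl| = k, i.e. HL ∩ Fl = Fl \ FL (claim c1). *)

Section MatchingFacts.
Variable T : finType.
Implicit Types E F M : {set {set T}}.

Lemma matching_le_nu E M : matching E M -> #|M| <= nu E.
Proof.
move=> mM; apply: (@leq_bigmax_cond _ _ (fun M0 => #|M0|) M).
by rewrite powersetE; case/andP: (mM) => -> _; rewrite mM.
Qed.

Lemma matching_subgraph E E' M : E \subset E' -> matching E M -> matching E' M.
Proof.
by move=> sE /andP[sM disj]; rewrite /matching (subset_trans sM sE) disj.
Qed.

Lemma matching_setD E F M : matching E M -> matching (E :\: F) (M :\: F).
Proof.
case/andP=> sM /forallP disj; rewrite /matching setSD //=.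
apply/forallP=> e1; apply/implyP=> /setDP[e1M _].
apply/forallP=> e2; apply/implyP=> /setDP[e2M _].
by move: (disj e1); rewrite e1M => /forallP/(_ e2); rewrite e2M.
Qed.

End MatchingFacts.

Lemma card_setD_sym (T : finType) (A B : {set T}) :
  #|A| = #|B| -> #|A :\: B| = #|B :\: A|.
Proof. by move=> cAB; rewrite !cardsD cAB setIC. Qed.

Theorem theorem2 (T : finType) (E : {set {set T}}) (FL Fl HL : {set {set T}}) :
  simple_graph E ->
  Lg E = 2 * lg E ->
  max_matching E FL -> nu (E :\: FL) = Lg E ->
  max_matching E Fl -> nu (E :\: Fl) = lg E ->
  max_matching (E :\: FL) HL ->
  [/\ Fl :\: FL \subset HL,
      max_matching (E :\: Fl) (HL :\: Fl)
    & max_matching (E :\: Fl) (FL :\: Fl)].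
Proof.
move=> _ L2l /andP[mFL /eqP cFL] nuFL /andP[mFl /eqP cFl] nuFl /andP[mHL /eqP cHL].
have mHLd : matching (E :\: Fl) (HL :\: Fl).
  exact: matching_setD (matching_subgraph (subsetDl E FL) mHL).
have mFLd : matching (E :\: Fl) (FL :\: Fl) by exact: matching_setD.
have HLd_le : #|HL :\: Fl| <= lg E by rewrite -nuFl matching_le_nu.
have FLd_le : #|FL :\: Fl| <= lg E by rewrite -nuFl matching_le_nu.
have k_sym : #|Fl :\: FL| = #|FL :\: Fl| by apply: card_setD_sym; rewrite cFl cFL.
(* HL avoids FL, so its edges in Fl lie in Fl \ FL. *)
have HLI_sub : HL :&: Fl \subset Fl :\: FL.
  apply/subsetP=> e /setIP[eHL eFl]; rewrite inE eFl andbT.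
  by case/andP: mHL => /subsetP/(_ e eHL)/setDP[].
have HLI_le := subset_leq_card HLI_sub.
have HL_split : #|HL :&: Fl| + #|HL :\: Fl| = 2 * lg E.
  by rewrite cardsID cHL nuFL L2l.
have [HLI_eq HLd_eq FLd_eq] :
    [/\ #|HL :&: Fl| = #|Fl :\: FL|, #|HL :\: Fl| = lg E & #|FL :\: Fl| = lg E].
  by move: HLI_le; rewrite k_sym; split; lia.
split.
- have /eqP <- : HL :&: Fl == Fl :\: FL by rewrite eqEcard HLI_sub HLI_eq /=.
  exact: subsetIl.
- by rewrite /max_matching mHLd HLd_eq nuFl eqxx.
- by rewrite /max_matching mFLd FLd_eq nuFl eqxx.
Qed.
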